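(* Let $K$ be a Hilbert space, $u,v\in\mathbb{B}(K)$ unitaries, $x\in\mathbb{B}(K)$ and $c\ge1$ such that $$\left\|\begin{bmatrix} u & x\\ -1 & v\end{bmatrix}\right\|\le c\sqrt2,$$ where the $2\times2$ operator matrix is viewed as an operator on $K\oplus^2K$. Then $\|x-uv\|\le 2\sqrt{c^2-1}$.
   Context: $\mathbb{B}(K)$ is the algebra of bounded operators on $K$ with the operator norm; $\mathbb{M}_2(\mathbb{B}(K))$ is identified isometrically with $\mathbb{B}(K\oplus^2K)$, where $\oplus^2$ is the Hilbert space direct sum. *)

From mathcomp Require Import all_boot all_order all_algebra.
From mathcomp Require Import complex.
From mathcomp Require Import classical_sets reals.
Set Implicit Arguments. Unset Strict Implicit. Unset Printing Implicit Defensive.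
Import Order.TTheory GRing.Theory Num.Theory.
Local Open Scope ring_scope.
Local Open Scope complex_scope.
Local Open Scope classical_set_scope.

Section Hilbert.
Variable R : realType.

Definition inner_product {V : lmodType R[i]} (dot : V -> V -> R[i]) : Prop :=
  [/\ (forall (a : R[i]) (x y z : V), dot (a *: x + y) z = a * dot x z + dot y z),
      (forall x y : V, dot y x = (dot x y)^*),
      (forall x : V, 0 <= dot x x) &
      (forall x : V, dot x x = 0 -> x = 0)].

Definition hnorm {V : Type} (dot : V -> V -> R[i]) (x : V) : R :=
  Num.sqrt (@complex.Re R (dot x x)).

Definition complete_for {V : lmodType R[i]} (dot : V -> V -> R[i]) : Prop :=
  forall f : nat -> V,
    (forall e : R, 0 < e -> exists N : nat, forall m n : nat, (N <= m)%N -> (N <= n)%N ->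
        hnorm dot (f m - f n) < e) ->
    exists l : V, forall e : R, 0 < e -> exists N : nat, forall n : nat, (N <= n)%N ->
        hnorm dot (f n - l) < e.

Definition hilbert_space {V : lmodType R[i]} (dot : V -> V -> R[i]) : Prop :=
  inner_product dot /\ complete_for dot.

Definition bounded_op {V : lmodType R[i]} (dot : V -> V -> R[i]) (T : V -> V) : Prop :=
  (forall (a : R[i]) (x y : V), T (a *: x + y) = a *: T x + T y) /\
  exists M : R, forall x : V, hnorm dot (T x) <= M * hnorm dot x.

Definition is_adjoint {V : Type} (dot : V -> V -> R[i]) (T S : V -> V) : Prop :=
  forall x y : V, dot (T x) y = dot x (S y).

Definition unitary {V : lmodType R[i]} (dot : V -> V -> R[i]) (u : V -> V) : Prop :=
  bounded_op dot u /\
  exists us : V -> V, [/\ is_adjoint dot u us, (forall x, us (u x) = x) & (forall x, u (us x) = x)].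

Definition opnorm {U W : Type} (NU : U -> R) (NW : W -> R) (T : U -> W) : R :=
  sup [set NW (T h) | h in [set h | NU h <= 1]].

(* Hilbert direct sum K (+)^2 K: inner product on K * K *)
Definition dsum_dot {V : Type} (dot : V -> V -> R[i]) (p q : V * V) : R[i] :=
  dot p.1 q.1 + dot p.2 q.2.

(* the 2x2 operator matrix [a b; c d] acting on K (+) K (column vectors) *)
Definition opmx2 {V : lmodType R[i]} (a b c d : V -> V) (p : V * V) : V * V :=
  (a p.1 + b p.2, c p.1 + d p.2).

End Hilbert.

From HB Require Import structures.
From mathcomp Require Import all_boot all_order all_algebra.
From mathcomp Require Import complex.
From mathcomp Require Import classical_sets reals.
From mathcomp Require Import ring lra.

Set Implicit Arguments.
Unset Strict Implicit.
Unset Printing Implicit Defensive.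

Import Order.TTheory GRing.Theory Num.Theory.
Local Open Scope ring_scope.
Local Open Scope complex_scope.

(* The operator matrix maps the vector (-v b, b), of norm sqrt 2 ||b||, to
   (x b - u v b, 2 v b).  As v is isometric, the norm bound gives
   ||x b - u v b||^2 + 4 ||b||^2 <= 2 c^2 * 2 ||b||^2, that is
   ||x b - u v b|| <= 2 sqrt (c^2 - 1) ||b||. *)

Section OperatorNorm.
Variables (R : realType) (U W : Type) (NU : U -> R) (NW : W -> R) (T : U -> W).

Lemma opnorm_le (B : R) :
  (exists h, NU h <= 1) -> (forall h, NU h <= 1 -> NW (T h) <= B) ->
  opnorm NU NW T <= B.
Proof.
move=> [h0 h0_le1] leB; apply: ge_sup; first by exists (NW (T h0)), h0.
by move=> _ [h /leB + <-].
Qed.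

(* [sup] of a set that is not bounded above is a junk value, hence [M]. *)
Lemma le_opnorm (M : R) h :
  (forall h, NU h <= 1 -> NW (T h) <= M) -> NU h <= 1 ->
  NW (T h) <= opnorm NU NW T.
Proof.
move=> leM h_le1; apply: sup_upper_bound; last by exists h.
by split; [exists (NW (T h)), h | exists M => _ [g /leM + <-]].
Qed.

End OperatorNorm.

Section InnerProduct.
Variables (R : realType) (V : lmodType R[i]) (dot : V -> V -> R[i]).
Hypothesis ip : inner_product dot.

Lemma dotDl x y z : dot (x + y) z = dot x z + dot y z.
Proof. by case: ip => linl _ _ _; rewrite -[x]scale1r linl mul1r scale1r. Qed.

Lemma dot0l z : dot 0 z = 0.
Proof. by apply: (addrI (dot 0 z)); rewrite -dotDl !addr0. Qed.

Lemma dotZl a x z : dot (a *: x) z = a * dot x z.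
Proof. by case: ip => linl _ _ _; rewrite -[a *: x]addr0 linl dot0l addr0. Qed.

Lemma dotNl x z : dot (- x) z = - dot x z.
Proof. by rewrite -scaleN1r dotZl mulN1r. Qed.

Lemma dotDr x y z : dot z (x + y) = dot z x + dot z y.
Proof. by case: ip => _ sym _ _; rewrite sym dotDl rmorphD /= -!sym. Qed.

Lemma dotZr a x z : dot z (a *: x) = a^*%C * dot z x.
Proof. by case: ip => _ sym _ _; rewrite sym dotZl rmorphM /= -sym. Qed.

Lemma dotNr x z : dot z (- x) = - dot z x.
Proof. by rewrite -scaleN1r dotZr rmorphN1 mulN1r. Qed.

Lemma dot_hnorm z : dot z z = (hnorm dot z ^+ 2)%:C.
Proof.
case: ip => _ _ nonneg _; move: (nonneg z); rewrite /hnorm lecE.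
by case: (dot z z) => a b /= /andP[/eqP -> a_ge0]; rewrite sqr_sqrtr.
Qed.

Lemma hnorm_ge0 z : 0 <= hnorm dot z.
Proof. exact: sqrtr_ge0. Qed.

Lemma hnorm0 : hnorm dot 0 = 0.
Proof. by rewrite /hnorm dot0l sqrtr0. Qed.

Lemma hnorm_eq0 z : hnorm dot z = 0 -> z = 0.
Proof. by case: ip => _ _ _ definite z0; apply: definite; rewrite dot_hnorm z0 expr0n. Qed.

Lemma hnormZ (t : R) z : hnorm dot (t%:C *: z) = `|t| * hnorm dot z.
Proof.
have tz : dot (t%:C *: z) (t%:C *: z) = (t ^+ 2 * hnorm dot z ^+ 2)%:C.
  by rewrite dotZl dotZr conjc_real dot_hnorm -!rmorphM mulrA expr2.
by rewrite /hnorm tz /= sqrtrM ?sqr_ge0 // sqrtr_sqr [dot z z]dot_hnorm.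
Qed.

Lemma hnormN z : hnorm dot (- z) = hnorm dot z.
Proof.
by rewrite -scaleN1r -[-1 : R[i]](rmorphN1 (real_complex R)) hnormZ normrN1 mul1r.
Qed.

Lemma hnorm_parallelogram a b :
  hnorm dot (a + b) ^+ 2 + hnorm dot (a - b) ^+ 2 =
  2 * hnorm dot a ^+ 2 + 2 * hnorm dot b ^+ 2.
Proof.
apply: complexI; rewrite !mulr_natl rmorphD [RHS]rmorphD !rmorphMn /= -!dot_hnorm.
by rewrite !dotDl !dotDr !dotNl !dotNr; ring.
Qed.

Lemma hnormD_sqr_le a b :
  hnorm dot (a + b) ^+ 2 <= 2 * hnorm dot a ^+ 2 + 2 * hnorm dot b ^+ 2.
Proof. by rewrite -hnorm_parallelogram lerDl sqr_ge0. Qed.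

End InnerProduct.

Section BoundedOperator.
Variables (R : realType) (V : lmodType R[i]) (dot : V -> V -> R[i]).
Hypothesis ip : inner_product dot.

Lemma bounded_opW T : bounded_op dot T ->
  exists2 M, 0 <= M & forall z, hnorm dot (T z) <= M * hnorm dot z.
Proof.
case=> _ [M leM]; exists `|M|; first exact: normr_ge0.
by move=> z; rewrite (le_trans (leM z)) // ler_wpM2r ?hnorm_ge0 ?ler_norm.
Qed.

Lemma bounded_op_opp : bounded_op dot (fun h => - h).
Proof.
split=> [a x y|]; first by rewrite opprD scalerN.
by exists 1 => z; rewrite hnormN // mul1r.
Qed.

Lemma unitary_hnorm u : unitary dot u -> forall z, hnorm dot (u z) = hnorm dot z.
Proof. by case=> _ [us [adj usK _]] z; rewrite /hnorm adj usK. Qed.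

Section Linear.
Variable T : V -> V.
Hypothesis boundedT : bounded_op dot T.
HB.instance Definition _ := GRing.isLinear.Build R[i] V V *:%R T boundedT.1.

Lemma hnorm_le_opnorm h :
  hnorm dot (T h) <= opnorm (hnorm dot) (hnorm dot) T * hnorm dot h.
Proof.
have [M M_ge0 leM] := bounded_opW boundedT.
have ball g : hnorm dot g <= 1 -> hnorm dot (T g) <= M.
  by move=> g_le1; rewrite (le_trans (leM g)) // ler_piMr.
have [h0|h_neq0] := eqVneq (hnorm dot h) 0.
  by rewrite h0 mulr0 (hnorm_eq0 ip h0) linear0 hnorm0.
set r := hnorm dot h in h_neq0 *.
have r_gt0 : 0 < r by rewrite lt_neqAle eq_sym h_neq0 hnorm_ge0.
have normalize y : hnorm dot ((r^-1)%:C *: y) = r^-1 * hnorm dot y.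
  by rewrite hnormZ // ger0_norm // invr_ge0 ltW.
have unit_h : hnorm dot ((r^-1)%:C *: h) <= 1 by rewrite normalize mulVf.
by have := le_opnorm ball unit_h; rewrite linearZ normalize ler_pdivrMl // mulrC.
Qed.

End Linear.
End BoundedOperator.

Section DirectSum.
Variables (R : realType) (K : lmodType R[i]) (dot : K -> K -> R[i]).
Hypothesis ip : inner_product dot.

Lemma inner_product_dsum : inner_product (dsum_dot dot).
Proof.
case: ip => linl sym nonneg definite; split.
- by move=> a [x1 x2] [y1 y2] [z1 z2]; rewrite /dsum_dot /= !linl mulrDr addrACA.
- by move=> p q; rewrite /dsum_dot rmorphD /= -!sym.
- by move=> p; rewrite addr_ge0.
- move=> [p1 p2] /eqP; rewrite /dsum_dot /= paddr_eq0 //.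
  by case/andP=> /eqP/definite -> /eqP/definite ->.
Qed.

Lemma hnorm_dsum p :
  hnorm (dsum_dot dot) p ^+ 2 = hnorm dot p.1 ^+ 2 + hnorm dot p.2 ^+ 2.
Proof.
by apply: complexI; rewrite rmorphD /= -!(dot_hnorm ip) -(dot_hnorm inner_product_dsum).
Qed.

Lemma bounded_op_opmx2 a b c d :
  bounded_op dot a -> bounded_op dot b -> bounded_op dot c -> bounded_op dot d ->
  bounded_op (dsum_dot dot) (opmx2 a b c d).
Proof.
move=> ba bb bc bd; split.
  move=> k [p1 p2] [q1 q2]; rewrite /opmx2 /= ba.1 bb.1 bc.1 bd.1.
  by congr pair; rewrite /= scalerDr addrACA.
have sqr_bound T : bounded_op dot T -> exists2 M, 0 <= M &
    forall z, hnorm dot (T z) ^+ 2 <= M * hnorm dot z ^+ 2.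
  case/bounded_opW=> M M_ge0 leM; exists (M ^+ 2) => [|z]; first exact: sqr_ge0.
  by rewrite -exprMn ler_sqr ?nnegrE ?mulr_ge0 ?hnorm_ge0.
have [[Ma Ma0 la] [Mb Mb0 lb]] := (sqr_bound a ba, sqr_bound b bb).
have [[Mc Mc0 lc] [Md Md0 ld]] := (sqr_bound c bc, sqr_bound d bd).
have N_ge0 : 0 <= 2 * (Ma + Mb + Mc + Md) by rewrite mulr_ge0 ?addr_ge0.
exists (Num.sqrt (2 * (Ma + Mb + Mc + Md))) => -[p1 p2].
rewrite -ler_sqr ?nnegrE ?mulr_ge0 ?sqrtr_ge0 // exprMn (sqr_sqrtr N_ge0).
rewrite !hnorm_dsum /=.
have := hnormD_sqr_le ip (a p1) (b p2); have := hnormD_sqr_le ip (c p1) (d p2).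
have := la p1; have := lb p2; have := lc p1; have := ld p2.
have := sqr_ge0 (hnorm dot p1); have := sqr_ge0 (hnorm dot p2).
nra.
Qed.

End DirectSum.

Section TestVector.
Variables (R : realType) (K : lmodType R[i]) (dot : K -> K -> R[i]).
Variables (u v x : K -> K).
Hypotheses (ip : inner_product dot) (hu : unitary dot u) (hv : unitary dot v).
HB.instance Definition _ := GRing.isLinear.Build R[i] K K *:%R u hu.1.1.

Lemma hnorm_test_vector b :
  hnorm (dsum_dot dot) (- v b, b) = Num.sqrt 2 * hnorm dot b.
Proof.
apply/eqP; rewrite -(eqrXn2 (isT : 0 < 2)%N) ?mulr_ge0 ?sqrtr_ge0 //.
rewrite hnorm_dsum //= exprMn (sqr_sqrtr (ler0n R 2)) hnormN //.
by rewrite (unitary_hnorm hv) -mulr2n mulr_natl.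
Qed.

Lemma hnorm_opmx2_test_vector b :
  hnorm (dsum_dot dot) (opmx2 u x (fun h => - h) v (- v b, b)) ^+ 2 =
  hnorm dot (x b - u (v b)) ^+ 2 + (2 * hnorm dot b) ^+ 2.
Proof.
rewrite /opmx2 /= linearN opprK addrC hnorm_dsum //= -mulr2n -scaler_nat.
by rewrite -(rmorph_nat (real_complex R)) hnormZ // (unitary_hnorm hv) normr_nat.
Qed.

End TestVector.

Theorem lemma2p2 (R : realType) (K : lmodType R[i]) (dot : K -> K -> R[i])
  (HK : hilbert_space dot) (u v x : K -> K) (c : R)
  (hu : unitary dot u) (hv : unitary dot v) (hx : bounded_op dot x)
  (hc : 1 <= c)
  (hM : opnorm (hnorm (dsum_dot dot)) (hnorm (dsum_dot dot))
          (opmx2 u x (fun h => - h) v) <= c * Num.sqrt 2) :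
  opnorm (hnorm dot) (hnorm dot) (fun h => x h - u (v h))
    <= 2 * Num.sqrt (c ^+ 2 - 1).
Proof.
have ip := HK.1.
have boundedM := bounded_op_opmx2 ip hu.1 hx (bounded_op_opp ip) hv.1.
apply: opnorm_le => [|b b_le1]; first by exists 0; rewrite hnorm0.
have test : hnorm dot (x b - u (v b)) ^+ 2 + (2 * hnorm dot b) ^+ 2 <=
            (2 * c * hnorm dot b) ^+ 2.
  rewrite -(hnorm_opmx2_test_vector x ip hu hv) ler_sqr ?nnegrE ?sqrtr_ge0 //; last first.
    by rewrite !mulr_ge0 ?sqrtr_ge0 // (le_trans ler01 hc).
  apply: le_trans (hnorm_le_opnorm (inner_product_dsum ip) boundedM _) _.
  rewrite (hnorm_test_vector ip hv) mulrA ler_wpM2r ?sqrtr_ge0 //.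
  by rewrite (le_trans (ler_wpM2r (sqrtr_ge0 2) hM)) // -mulrA -expr2 sqr_sqrtr // mulrC.
have c2_ge0 : 0 <= c ^+ 2 - 1 by rewrite subr_ge0 expr_ge1 // (le_trans ler01 hc).
rewrite -ler_sqr ?nnegrE ?mulr_ge0 ?hnorm_ge0 ?sqrtr_ge0 // exprMn (sqr_sqrtr c2_ge0).
have b2_le1 : hnorm dot b ^+ 2 <= 1 by rewrite expr_le1 ?hnorm_ge0.
nra.
Qed.
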